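(* Let $n\ge1$, $0\le r\le n$ and $0\le k\le\binom{n-1}{r}$ be integers, let $X=[n]$, and let $\mathcal{A}\subseteq[n]^{(r)}$ be the initial segment of the colexicographic order of size $k$. For $1\le i\le n$ let $\mathcal{A}_{i,0}=\{B\in X_i^{(r-1)}: B\cup\{i\}\in\mathcal{A}\}$, $\mathcal{A}_{i,1}=\{B\in X_i^{(r)}: B\in\mathcal{A}\}$ and $A_i=X^{(\ge r+1)}\cup\mathcal{A}_{i,1}\cup\mathcal{A}_{i,0}\subseteq Q_n$. Then for distinct $i,j\in[n]$, $A_i$ and $A_j$ are isomorphic if and only if $\sigma(\mathcal{A})=\mathcal{A}$ for the transposition $\sigma=(ij)$.
   Context: $X_i=[n]\setminus\{i\}$; $Y^{(m)}$ denotes the $m$-subsets of $Y$ and $X^{(\ge m)}$ the subsets of size at least $m$. Colexicographic order: $A<_{colex}B$ iff $\max(A\Delta B)\in B$. For a permutation $\sigma$, $\sigma(\mathcal{A})=\{\{\sigma(b_1),\dots,\sigma(b_t)\}:\{b_1,\dots,b_t\}\in\mathcal{A}\}$. $Q_n$ is the hypercube on the power set of $[n]$ with metric $|x\Delta y|$; two subsets of $Q_n$ are isomorphic if related by an automorphism of $Q_n$ (a map $x\mapsto\tau(x)\Delta I$, $\tau$ a permutation of $[n]$, $I\subseteq[n]$). *)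

(* [n] = {1..n} is modelled by 'I_n = {0..n-1} (order-preserving shift). *)
From mathcomp Require Import all_boot all_order all_fingroup.
Set Implicit Arguments. Unset Strict Implicit. Unset Printing Implicit Defensive.

Section Defs.
Variable n : nat.
Local Notation T := 'I_n.

Definition symdiff (A B : {set T}) : {set T} := (A :\: B) :|: (B :\: A).

Definition colex_lt (A B : {set T}) : bool :=
  [exists x, [&& x \in symdiff A B, x \in B &
                [forall y, (y \in symdiff A B) ==> (y <= x)%N]]].

Definition colex_initial (r k : nat) (F : {set {set T}}) : Prop :=
  [/\ forall B : {set T}, B \in F -> #|B| = r,
      #|F| = k &
      forall B C : {set T}, B \in F -> #|C| = r -> colex_lt C B -> C \in F].

Definition layers_ge (m : nat) : {set {set T}} := [set B : {set T} | (m <= #|B|)%N].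

Definition A_i0 (r : nat) (F : {set {set T}}) (i : T) : {set {set T}} :=
  [set B : {set T} | [&& i \notin B, #|B|.+1 == r & (i |: B) \in F]].

Definition A_i1 (r : nat) (F : {set {set T}}) (i : T) : {set {set T}} :=
  [set B : {set T} | [&& i \notin B, #|B| == r & B \in F]].

Definition A_i (r : nat) (F : {set {set T}}) (i : T) : {set {set T}} :=
  layers_ge r.+1 :|: A_i1 r F i :|: A_i0 r F i.

Definition cube_aut (tau : {perm T}) (I : {set T}) (x : {set T}) : {set T} :=
  symdiff (tau @: x) I.

Definition cube_isomorphic (S S' : {set {set T}}) : Prop :=
  exists (tau : {perm T}) (I : {set T}), [set cube_aut tau I x | x : {set T} in S] = S'.

Definition perm_family (s : {perm T}) (F : {set {set T}}) : {set {set T}} :=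
  [set (s @: B) | B : {set T} in F].
End Defs.

(* An automorphism of Q_n is an isometry, so it maps the centres of A_i, i.e. the
   points whose Hamming ball of radius n-r-1 lies inside A_i, onto the centres of A_j.
   For 0 < r < n the largest element m of [n] lies in no member of F, and the centres
   of A_i are [n] and possibly [n] \ {m, i}; the latter is a centre only when F
   consists of all r-sets avoiding m.  If the isomorphism fixes [n] it is a
   permutation, so A_i and A_j have equally many r-sets: F has as many members
   avoiding i as avoiding j, and since an initial colex segment is shifted this
   forces F to be (ij)-symmetric.  Otherwise it maps [n] to [n] \ {m, j} and its
   inverse maps [n] to [n] \ {m, i}; comparing distances gives i, j <> m, and F,
   being all r-sets avoiding m, is again (ij)-symmetric.  Conversely (ij) itself
   maps A_i onto A_j whenever F is (ij)-symmetric. *)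

From mathcomp Require Import all_boot all_order all_fingroup zify.
Set Implicit Arguments. Unset Strict Implicit. Unset Printing Implicit Defensive.

Section FinSet.
Variable T : finType.

Lemma subset_setC2 (A : {set T}) a b : a \notin A -> b \notin A -> A \subset ~: [set a; b].
Proof.
move=> aA bA; apply/subsetP => x xA; rewrite !inE; apply/norP.
by split; apply/eqP => ex; [move: aA | move: bA]; rewrite -ex xA.
Qed.

Lemma mem_imset_perm (s : {perm T}) (A : {set T}) x :
  (x \in s @: A) = ((s^-1)%g x \in A).
Proof. by rewrite -preim_permV inE. Qed.

Lemma mem_imset_tperm (a b : T) (A : {set T}) x :
  (x \in tperm a b @: A) = (tperm a b x \in A).
Proof. by rewrite mem_imset_perm tpermV. Qed.

Lemma imset_tpermK (a b : T) : involutive (fun A : {set T} => tperm a b @: A).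
Proof. by move=> A; apply/setP => x; rewrite !mem_imset_tperm tpermK. Qed.

Lemma card_imset_perm (s : {perm T}) (A : {set T}) : #|s @: A| = #|A|.
Proof. exact/card_imset/perm_inj. Qed.

Lemma imset_permT (s : {perm T}) : s @: setT = setT.
Proof. by rewrite -preim_permV preimsetT. Qed.

Lemma card_layer_imset_perm (s : {perm T}) (S : {set {set T}}) (r : nat) :
  #|[set x in [set s @: y | y : {set T} in S] | #|x| == r]| = #|[set x in S | #|x| == r]|.
Proof.
have -> : [set x in [set s @: y | y : {set T} in S] | #|x| == r]
          = [set s @: y | y : {set T} in [set y in S | #|y| == r]].
  apply/setP => x; rewrite inE; apply/andP/imsetP => [[/imsetP[y yS ->]]|[y]].
    by rewrite card_imset_perm => yr; exists y; rewrite // inE yS.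
  by rewrite inE => /andP[yS yr] ->; rewrite imset_f // card_imset_perm.
exact/card_imset/imset_inj/perm_inj.
Qed.

Lemma exists_subset_card (A : {set T}) k :
  k <= #|A| -> exists2 B : {set T}, B \subset A & #|B| = k.
Proof.
rewrite -bin_gt0 -cards_draws => /card_gt0P[B]; rewrite inE => /andP[BA /eqP Bk].
by exists B.
Qed.

Lemma exists_subset_card_mem (A : {set T}) x k :
  x \in A -> 0 < k <= #|A| -> exists2 B : {set T}, B \subset A & x \in B /\ #|B| = k.
Proof.
move=> xA /andP[k_gt0 kA].
have [|B BA Bk] := @exists_subset_card (A :\ x) k.-1.
  by rewrite (cardsD1 x A) xA in kA; rewrite -ltnS prednK.
have xB : x \notin B by apply/negP => /(subsetP BA); rewrite !inE eqxx.
exists (x |: B); last by rewrite setU11 cardsU1 xB Bk add1n prednK.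
by rewrite subUset sub1set xA (subset_trans BA) // subD1set.
Qed.

End FinSet.

Section Cube.
Variable n : nat.
Local Notation T := 'I_n.

Lemma in_symdiff (A B : {set T}) x : (x \in symdiff A B) = (x \in A) (+) (x \in B).
Proof. by rewrite !inE; case: (x \in A); case: (x \in B). Qed.

Lemma symdiffC (A B : {set T}) : symdiff A B = symdiff B A.
Proof. by apply/setP => x; rewrite !in_symdiff addbC. Qed.

Lemma symdiffs0 (A : {set T}) : symdiff A set0 = A.
Proof. by apply/setP => x; rewrite in_symdiff inE addbF. Qed.

Lemma symdiffTs (A : {set T}) : symdiff setT A = ~: A.
Proof. by apply/setP => x; rewrite in_symdiff !inE. Qed.

Lemma card_symdiff_subset (A B : {set T}) :
  B \subset A -> #|symdiff A B| = #|A| - #|B|.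
Proof.
move=> BA; rewrite -cardsDS //; apply: eq_card => x.
rewrite in_symdiff !inE; case: (boolP (x \in B)) => [/(subsetP BA)->|] //.
by rewrite addbF.
Qed.

Lemma card_symdiff_le (A B : {set T}) : #|symdiff A B| <= #|A| + #|B|.
Proof.
apply: leq_trans (leq_card_setU A B); apply: subset_leq_card.
by apply/subsetP => x; rewrite in_symdiff !inE; case: (x \in A).
Qed.

Lemma cube_aut_symdiff (s : {perm T}) (I x y : {set T}) :
  symdiff (cube_aut s I x) (cube_aut s I y) = s @: symdiff x y.
Proof.
apply/setP => z; rewrite !(in_symdiff, mem_imset_perm).
by case: (_ \in x); case: (_ \in y); case: (z \in I).
Qed.

Lemma card_symdiff_cube_aut (s : {perm T}) (I x y : {set T}) :
  #|symdiff (cube_aut s I x) (cube_aut s I y)| = #|symdiff x y|.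
Proof. by rewrite cube_aut_symdiff card_imset_perm. Qed.

Lemma cube_aut_inj (s : {perm T}) (I : {set T}) : injective (cube_aut s I).
Proof.
move=> x y exy; apply/setP => z; apply/eqP.
have : s z \notin symdiff (cube_aut s I x) (cube_aut s I y) by rewrite exy /symdiff setDv setU0 inE.
by rewrite cube_aut_symdiff mem_imset_perm permK in_symdiff; case: (z \in x); case: (z \in y).
Qed.

Lemma cube_autT (s : {perm T}) (I : {set T}) : cube_aut s I setT = ~: I.
Proof. by rewrite /cube_aut imset_permT symdiffTs. Qed.

Lemma cube_aut0 (s : {perm T}) (x : {set T}) : cube_aut s set0 x = s @: x.
Proof. exact: symdiffs0. Qed.

Definition ball_in (S : {set {set T}}) (d : nat) (v : {set T}) : Prop :=
  forall w, #|symdiff v w| <= d -> w \in S.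

Lemma ball_in_cube_aut (s : {perm T}) (I : {set T}) (S : {set {set T}}) d v :
  ball_in [set cube_aut s I x | x in S] d (cube_aut s I v) <-> ball_in S d v.
Proof.
have [g _ gK] := injF_bij (@cube_aut_inj s I).
split=> ball w wd.
  by rewrite -(mem_imset _ _ (@cube_aut_inj s I)); apply: ball; rewrite card_symdiff_cube_aut.
by rewrite -[w]gK imset_f //; apply: ball; rewrite -(card_symdiff_cube_aut s I) gK.
Qed.

Lemma perm_family_id (s : {perm T}) (F : {set {set T}}) :
  {in F, forall B : {set T}, s @: B \in F} -> perm_family s F = F.
Proof.
move=> sF; apply/eqP; rewrite eqEcard card_imset ?leqnn ?andbT; last first.
  exact/imset_inj/perm_inj.
by apply/subsetP => _ /imsetP[B BF ->]; exact: sF.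
Qed.

Definition shifted (F : {set {set T}}) : Prop :=
  forall (lo hi : T) B, lo < hi -> B \in F -> hi \in B -> lo \notin B ->
    tperm lo hi @: B \in F.

Lemma shifted_tperm_id (F : {set {set T}}) (lo hi : T) :
  shifted F -> lo < hi ->
  #|[set B in F | lo \notin B]| = #|[set B in F | hi \notin B]| ->
  perm_family (tperm lo hi) F = F.
Proof.
move=> shF lo_hi card_eq; set tau := fun B : {set T} => tperm lo hi @: B.
have fixed (B : {set T}) : lo \in B = (hi \in B) -> tau B = B.
  move=> lohi; apply/setP => x; rewrite mem_imset_tperm.
  by case: tpermP => [->|->|] //; rewrite lohi.
have into : tau @: [set B in F | lo \notin B] \subset [set B in F | hi \notin B].
  apply/subsetP => _ /imsetP[B + ->]; rewrite !inE => /andP[BF loB].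
  rewrite mem_imset_tperm tpermR loB andbT.
  have [hiB | hiB] := boolP (hi \in B); first exact: shF.
  by rewrite fixed // (negbTE loB) (negbTE hiB).
have onto : tau @: [set B in F | lo \notin B] = [set B in F | hi \notin B].
  apply/eqP; rewrite eqEcard into card_imset -?card_eq ?leqnn //.
  exact: inv_inj (imset_tpermK lo hi).
apply: perm_family_id => B BF.
have [loB|loB] := boolP (lo \in B); last first.
  by have /(subsetP into)/setIdP[] : tau B \in tau @: [set B in F | lo \notin B]
    by rewrite imset_f // inE BF.
have [hiB|hiB] := boolP (hi \in B); first by rewrite [tperm _ _ @: _]fixed ?loB ?hiB.
have : B \in tau @: [set B in F | lo \notin B] by rewrite onto inE BF.
by case/imsetP => C /setIdP[CF _] ->; rewrite [tperm _ _ @: _]imset_tpermK.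
Qed.

Lemma colex_initial_shifted r k (F : {set {set T}}) : colex_initial r k F -> shifted F.
Proof.
case=> Fr _ Fc lo hi B lo_hi BF hiB loB.
apply: (Fc _ _ BF); first by rewrite card_imset_perm Fr.
apply/existsP; exists hi; rewrite in_symdiff mem_imset_tperm tpermR (negbTE loB) hiB /=.
apply/forallP => y; apply/implyP; rewrite in_symdiff mem_imset_tperm.
by case: tpermP => [->|->|/eqP yl /eqP yh]; rewrite ?addbb // => _; apply: ltnW.
Qed.

Lemma in_A_i r (F : {set {set T}}) i (w : {set T}) :
  (w \in A_i r F i) =
  [|| r < #|w|, [&& i \notin w, #|w| == r & w \in F]
              | [&& i \notin w, #|w|.+1 == r & i |: w \in F]].
Proof. by rewrite /A_i /layers_ge /A_i1 /A_i0 !inE -orbA. Qed.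

Lemma mem_A_i_card r (F : {set {set T}}) i (w : {set T}) :
  #|w| = r -> (w \in A_i r F i) = (i \notin w) && (w \in F).
Proof. by move=> <-; rewrite in_A_i ltnn eqxx eqn_leq ltnn /= !andbF orbF. Qed.

Lemma mem_A_i_card_pred r (F : {set {set T}}) i (w : {set T}) :
  #|w|.+1 = r -> (w \in A_i r F i) = (i \notin w) && (i |: w \in F).
Proof.
by move=> <-; rewrite in_A_i ltnNge leqnSn eqn_leq ltnn andbF eqxx /= andbF.
Qed.

Lemma A_i_layer r (F : {set {set T}}) i : {in F, forall B : {set T}, #|B| = r} ->
  [set x in A_i r F i | #|x| == r] = [set B in F | i \notin B].
Proof.
move=> Fr; apply/setP => x; rewrite in_set [RHS]in_set.
have [xr|xr] := eqVneq #|x| r; first by rewrite (mem_A_i_card _ _ xr) andbT andbC.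
by rewrite andbF; apply/esym/negP => /andP[/Fr/eqP]; rewrite (negbTE xr).
Qed.

Lemma A_i_tperm_subset r (F : {set {set T}}) i j :
  perm_family (tperm i j) F = F ->
  [set tperm i j @: x | x : {set T} in A_i r F i] \subset A_i r F j.
Proof.
move=> Fsym; apply/subsetP => _ /imsetP[x + ->].
rewrite !in_A_i card_imset_perm mem_imset_tperm tpermR.
have inF B : B \in F -> tperm i j @: B \in F by rewrite -{2}Fsym => BF; apply: imset_f.
case/or3P => [-> // | /and3P[-> -> /inF ->] | /and3P[-> -> /inF]]; rewrite ?orbT //.
by rewrite imsetU1 tpermL => ->; rewrite !orbT.
Qed.

Lemma tperm_id_A_i_iso r (F : {set {set T}}) i j :
  perm_family (tperm i j) F = F -> cube_isomorphic (A_i r F i) (A_i r F j).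
Proof.
move=> Fsym; exists (tperm i j), set0; rewrite (eq_imset _ (cube_aut0 _)).
have Fsym' : perm_family (tperm j i) F = F by rewrite tpermC.
apply/eqP; rewrite eqEcard A_i_tperm_subset //= card_imset; last exact/imset_inj/perm_inj.
rewrite -(card_imset (A_i r F j) (imset_inj (@perm_inj _ (tperm j i)))).
exact/subset_leq_card/A_i_tperm_subset.
Qed.

End Cube.

Lemma colex_initial_notin_max n r k (F : {set {set 'I_n.+1}}) :
  k <= 'C(n, r) -> colex_initial r k F -> {in F, forall B : {set 'I_n.+1}, ord_max \notin B}.
Proof.
move=> kC [Fr Fk Fc] B BF; apply/negP => mB.
pose D := [set C : {set 'I_n.+1} | C \subset [set~ ord_max] & #|C| == r].
have notin_D C : C \in D -> ord_max \notin C.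
  by rewrite inE => /andP[/subsetP CD _]; apply/negP => /CD; rewrite !inE eqxx.
have below : B |: D \subset F.
  apply/subsetP => C; rewrite in_setU1 => /orP[/eqP -> // | CD].
  apply: (Fc B C BF); first by move: CD; rewrite inE => /andP[_ /eqP].
  apply/existsP; exists ord_max; rewrite in_symdiff mB (negbTE (notin_D C CD)) /=.
  by apply/forallP => y; apply/implyP => _; apply: leq_ord.
have := subset_leq_card below.
rewrite cardsU1 (contraL (notin_D B) mB) cards_draws cardsC1 card_ord Fk.
by move=> /leq_trans/(_ kC); rewrite ltnn.
Qed.

Section Centres.
Variables (n r : nat) (F : {set {set 'I_n}}) (m : 'I_n).
Hypotheses (r_gt0 : 0 < r) (r_lt_n : r < n).
Hypothesis Fr : {in F, forall B : {set 'I_n}, #|B| = r}.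
Hypothesis Fm : {in F, forall B : {set 'I_n}, m \notin B}.
Hypothesis F_shifted : shifted F.
Local Notation d := (n - r.+1).

Lemma card_setC2 (i : 'I_n) : #|~: [set m; i]| = n - (m != i).+1.
Proof. by rewrite cardsCs setCK card_ord cards2. Qed.

Lemma A_i_small_mem i w : w \in A_i r F i -> #|w| <= r ->
  w \subset ~: [set m; i] /\ #|~: [set m; i]| <= #|w| + d.
Proof.
rewrite in_A_i card_setC2.
case/or3P => [big | /and3P[iw /eqP wr wF] | /and3P[iw /eqP wr iwF]] w_le.
- by rewrite ltnNge w_le in big.
- by split; [exact: subset_setC2 (Fm wF) iw | lia].
- have := Fm iwF; rewrite !inE negb_or => /andP[mi mw].
  by split; [exact: subset_setC2 mw iw | rewrite mi; lia].
Qed.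

Lemma ball_A_i_setT i : ball_in (A_i r F i) d setT.
Proof.
move=> w; rewrite symdiffTs => w_far.
by rewrite in_A_i [#|w|]cardsCs card_ord; apply/orP; left; lia.
Qed.

Lemma ball_A_i_centre i v : ball_in (A_i r F i) d v -> v != setT -> v = ~: [set m; i].
Proof.
move=> ball vT.
have v_lt_n : #|v| < n.
  have /proper_card : v \proper setT by rewrite properT.
  by rewrite cardsT card_ord.
have small (w : {set 'I_n}) : w \subset v -> #|v| <= #|w| + d -> #|w| <= r ->
    w \subset ~: [set m; i] /\ #|~: [set m; i]| <= #|w| + d.
  move=> wv vw wr; apply: (A_i_small_mem _ wr); apply: ball.
  by rewrite card_symdiff_subset //; lia.
have d_le_v : d <= #|v|.
  rewrite leqNgt; apply/negP => v_small.
  have [] := @A_i_small_mem i [set m]; rewrite ?cards1 //.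
    by apply: ball; apply: leq_trans (card_symdiff_le _ _) _; rewrite cards1; lia.
  by move/subsetP/(_ m (set11 m)); rewrite !inE eqxx.
have v_sub : v \subset ~: [set m; i].
  apply/subsetP => x xv; have v_gt0 : 0 < #|v| by apply/card_gt0P; exists x.
  have k_ok : 0 < (#|v| - d.+1).+1 <= #|v| by lia.
  have [w wv [xw w_card]] := exists_subset_card_mem xv k_ok.
  by have [/subsetP wZ _] := small w wv ltac:(lia) ltac:(lia); apply: wZ.
have [w wv w_card] := exists_subset_card (leq_subr d #|v|).
have [_ Z_le] := small w wv ltac:(lia) ltac:(lia).
by apply/eqP; rewrite eqEcard v_sub -(subnK d_le_v) -w_card.
Qed.

Lemma ball_A_i_full i : ball_in (A_i r F i) d (~: [set m; i]) ->
  forall C : {set 'I_n}, #|C| = r -> m \notin C -> C \in F.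
Proof.
move=> ball C Cr mC.
have inball (w : {set 'I_n}) :
    w \subset ~: [set m; i] -> #|~: [set m; i]| <= #|w| + d -> w \in A_i r F i.
  by move=> wZ wd; apply: ball; rewrite card_symdiff_subset // leq_subLR.
have [iC | iC] := boolP (i \in C); last first.
  have := inball C (subset_setC2 mC iC); rewrite card_setC2 (mem_A_i_card _ _ Cr) iC.
  by apply; lia.
have mi : m != i by apply: contraNneq mC => ->.
have Ci : #|C :\ i|.+1 = r by rewrite -Cr (cardsD1 i C) iC.
have mCi : m \notin C :\ i by rewrite !inE negb_and mC orbT.
have := inball (C :\ i) (subset_setC2 mCi (negbT (setD11 i C))).
by rewrite card_setC2 mi (mem_A_i_card_pred _ _ Ci) setD11 setD1K //; apply; lia.
Qed.

Lemma A_i_perm_tperm_id (s : {perm 'I_n}) i j : i != j ->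
  [set s @: x | x : {set 'I_n} in A_i r F i] = A_i r F j -> perm_family (tperm i j) F = F.
Proof.
move=> ij E.
have layers : #|[set B in F | i \notin B]| = #|[set B in F | j \notin B]|.
  by rewrite -!(A_i_layer _ Fr) -E card_layer_imset_perm.
case: (ltngtP i j) => [lt | gt | /val_inj eq]; first exact: shifted_tperm_id.
  by rewrite tpermC; apply: shifted_tperm_id.
by rewrite eq eqxx in ij.
Qed.

Lemma A_i_iso_tperm_id i j : i != j ->
  cube_isomorphic (A_i r F i) (A_i r F j) -> perm_family (tperm i j) F = F.
Proof.
move=> ij [s [I E]].
have centre_j : ball_in (A_i r F j) d (cube_aut s I setT).
  by rewrite -E ball_in_cube_aut; apply: ball_A_i_setT.
have [phiT | phiT] := eqVneq (cube_aut s I setT) setT.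
  have I0 : I = set0 by rewrite -[I]setCK -(cube_autT s I) phiT setCT.
  by move: E; rewrite I0 (eq_imset _ (cube_aut0 s)); apply: A_i_perm_tperm_id.
have [g _ gK] := injF_bij (@cube_aut_inj _ s I).
have centre_i : ball_in (A_i r F i) d (g setT).
  by rewrite -(ball_in_cube_aut s I) gK E; apply: ball_A_i_setT.
have gT : g setT != setT by apply: contraNneq phiT => gT; rewrite -{1}gT gK.
have := card_symdiff_cube_aut s I setT (g setT).
rewrite gK (ball_A_i_centre centre_j phiT) (ball_A_i_centre centre_i gT).
rewrite symdiffC !symdiffTs !setCK !cards2 => -[mij].
have [mi mj] : m != i /\ m != j.
  case: (eqVneq m i) mij => [-> | _ mij]; first by rewrite ij.
  by split; case: eqVneq mij.
apply: perm_family_id => B BF; apply: (ball_A_i_full (i := j)).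
- by rewrite -(ball_A_i_centre centre_j phiT).
- by rewrite card_imset_perm Fr.
- by rewrite mem_imset_tperm tpermD 1?eq_sym // Fm.
Qed.

End Centres.

Theorem lemma9 (n r k : nat) (F : {set {set 'I_n}}) (i j : 'I_n) :
  (1 <= n)%N -> (r <= n)%N -> (k <= 'C(n.-1, r))%N ->
  colex_initial r k F ->
  i != j ->
  (cube_isomorphic (A_i r F i) (A_i r F j) <-> perm_family (tperm i j) F = F).
Proof.
move=> _ rn kC colexF ij; split; last exact: tperm_id_A_i_iso.
move: F i j rn kC colexF ij; case: n => [|n] F i j; first by case: i.
move=> rn kC colexF ij; have [Fr Fk _] := colexF.
have [r0 | r_gt0] := posnP r.
  move=> _; apply: perm_family_id => B BF.
  have B0 : B = set0 by apply: cards0_eq; rewrite Fr.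
  by rewrite B0 imset0 -B0.
have [r_lt | r_ge] := ltnP r n.+1.
  have Fm := @colex_initial_notin_max n _ _ _ kC colexF.
  exact: (A_i_iso_tperm_id r_gt0 r_lt Fr Fm (colex_initial_shifted colexF) ij).
have F0 : F = set0.
  by apply/cards0_eq; rewrite Fk; apply/eqP; rewrite -leqn0 -(bin_small r_ge).
by move=> _; rewrite F0; apply: perm_family_id => B; rewrite inE.
Qed.
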